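(* For every $m \ge 1$, the commutator subgroup $TW_{m+2}'$ of the twin group $TW_{m+2}$ has rank (minimal cardinality of a generating set) equal to $2m-1$.
   Context: For $n \ge 2$, the twin group $TW_n$ is the group with generators $\tau_1,\dots,\tau_{n-1}$ and defining relations $\tau_i^2=1$ for all $i$, and $\tau_i\tau_j=\tau_j\tau_i$ whenever $|i-j|>1$. $G'$ denotes the commutator subgroup of a group $G$. *)

From mathcomp Require Import all_boot.
Set Implicit Arguments. Unset Strict Implicit. Unset Printing Implicit Defensive.

(* Words in the generators tau_1..tau_{n-1} of TW_n; the letter i : 'I_(n.-1)
   stands for tau_(i+1).  Since each tau_i is an involution, the inverse of a
   word is its reversal, so no inverse letters are needed. *)
Definition tw_word (n : nat) := seq 'I_n.-1.

Inductive tw_eq (n : nat) : tw_word n -> tw_word n -> Prop :=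
| tw_sq (i : 'I_n.-1) : tw_eq [:: i; i] [::]
| tw_comm (i j : 'I_n.-1) :
    (i.+1 < j)%N \/ (j.+1 < i)%N -> tw_eq [:: i; j] [:: j; i]
| tw_refl (u : tw_word n) : tw_eq u u
| tw_sym (u v : tw_word n) : tw_eq u v -> tw_eq v u
| tw_trans (u v w : tw_word n) : tw_eq u v -> tw_eq v w -> tw_eq u w
| tw_ctx (a b u v : tw_word n) : tw_eq u v -> tw_eq (a ++ u ++ b) (a ++ v ++ b).

Definition tw_mul n (u v : tw_word n) : tw_word n := u ++ v.
Definition tw_inv n (u : tw_word n) : tw_word n := rev u.
Definition tw_commutator n (u v : tw_word n) : tw_word n :=
  tw_mul (tw_mul (tw_inv u) (tw_inv v)) (tw_mul u v).

Inductive tw_gen (n : nat) (S : tw_word n -> Prop) : tw_word n -> Prop :=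
| tw_gen_base (s : tw_word n) : S s -> tw_gen S s
| tw_gen_one : tw_gen S [::]
| tw_gen_inv (u : tw_word n) : tw_gen S u -> tw_gen S (tw_inv u)
| tw_gen_mul (u v : tw_word n) : tw_gen S u -> tw_gen S v -> tw_gen S (tw_mul u v)
| tw_gen_eq (u v : tw_word n) : tw_gen S u -> tw_eq u v -> tw_gen S v.

Definition tw_derived (n : nat) : tw_word n -> Prop :=
  tw_gen (fun w => exists u v : tw_word n, w = tw_commutator u v).

Definition tw_generates (n k : nat) (H : tw_word n -> Prop)
    (g : 'I_k -> tw_word n) : Prop :=
  forall w, H w <-> tw_gen (fun x => exists i, x = g i) w.

Definition tw_rank_eq (n : nat) (H : tw_word n -> Prop) (r : nat) : Prop :=
  (exists g : 'I_r -> tw_word n, tw_generates H g) /\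
  (forall (k : nat) (g : 'I_k -> tw_word n), tw_generates H g -> (r <= k)%N).

From mathcomp Require Import all_boot all_algebra zify.
From Stdlib Require Import FunctionalExtensionality.
Set Implicit Arguments. Unset Strict Implicit. Unset Printing Implicit Defensive.

(* Write c_i = (τ_i τ_{i+1})^2 = [τ_i, τ_{i+1}] and e_i = τ_{i+2} c_i τ_{i+2}
   = [τ_i, τ_{i+2} τ_{i+1} τ_{i+2}] (letters indexed from 0).  Conjugating any of
   these m + (m - 1) elements of TW' by a generator τ_v gives an explicit product
   of them and their inverses, so they generate a normal subgroup; it contains
   every [τ_x, τ_y], hence it is all of TW'.

   Conversely, read a word letter by letter, keep track of its image p in the
   abelianization (Z/2)^(m+1), and add up weights F(p, letter) in Z/2.  When F
   is compatible with the relations τ_i^2 = 1 and τ_i τ_j = τ_j τ_i, this is well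
   defined on TW_(m+2) and additive on TW'.  There are 2m - 1 such weights whose
   values on the c_i and e_i form the identity matrix, so TW' maps onto
   (Z/2)^(2m-1) and needs at least 2m - 1 generators. *)

Definition far (i j : nat) : bool := (i.+1 < j) || (j.+1 < i).

Section TwinWords.
Variable n : nat.
Implicit Types (u v w p s : tw_word n) (x y : 'I_n.-1).

Lemma tw_eq_catl u u' v : tw_eq u u' -> tw_eq (u ++ v) (u' ++ v).
Proof. exact: (tw_ctx [::] v). Qed.

Lemma tw_eq_catr u v v' : tw_eq v v' -> tw_eq (u ++ v) (u ++ v').
Proof. by move=> e; have := tw_ctx u [::] e; rewrite !cats0. Qed.

Lemma tw_cancel p x s : tw_eq (p ++ [:: x, x & s]) (p ++ s).
Proof. exact: (tw_ctx p s (tw_sq x)). Qed.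

Lemma tw_swap p x y s : far x y -> tw_eq (p ++ [:: x, y & s]) (p ++ [:: y, x & s]).
Proof. by move=> /orP xy; exact: (tw_ctx p s (tw_comm xy)). Qed.

Lemma tw_mulrV u : tw_eq (u ++ rev u) [::].
Proof.
elim: u => [|x u IH]; first exact: tw_refl.
rewrite rev_cons -cats1 catA.
apply: tw_trans (tw_ctx [:: x] [:: x] IH) (tw_cancel [::] x [::]).
Qed.

Lemma tw_cancel_word p u s : tw_eq (p ++ u ++ rev u ++ s) (p ++ s).
Proof. by have := tw_ctx p s (tw_mulrV u); rewrite -catA. Qed.

Lemma tw_mulVr u : tw_eq (rev u ++ u) [::].
Proof. by have := tw_mulrV (rev u); rewrite revK. Qed.

Lemma tw_eq_mulrV u v : tw_eq (u ++ rev v) [::] -> tw_eq u v.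
Proof.
move=> e; apply: tw_trans (tw_eq_catl v e); rewrite -catA.
by apply: tw_sym; have := tw_eq_catr u (tw_mulVr v); rewrite cats0.
Qed.

Lemma tw_comm_self x : tw_eq [:: x; x; x; x] [::].
Proof. exact: (tw_mulrV [:: x; x]). Qed.

Definition tw_conj x w : tw_word n := x :: w ++ [:: x].

Lemma tw_conj_far x w : all (fun y => far x y) w -> tw_eq (tw_conj x w) w.
Proof.
rewrite /tw_conj; elim: w => [_|y w IH /= /andP[xy /IH e]].
  exact: (tw_cancel [::] x [::]).
exact: tw_trans (tw_swap [::] _ xy) (tw_eq_catr [:: y] e).
Qed.

Lemma tw_comm_far x y : far x y -> tw_eq [:: x; y; x; y] [::].
Proof.
move=> xy; have e : tw_eq (tw_conj x [:: y]) [:: y] by apply: tw_conj_far; rewrite /= xy.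
exact: tw_trans (tw_eq_catl [:: y] e) (tw_cancel [::] y [::]).
Qed.

End TwinWords.

(** * Deciding identities by cancellation *)

(* In a right-angled Coxeter group a word is trivial iff it reduces to the empty
   word by repeatedly deleting two copies of a letter separated only by letters
   commuting with it (Tits); only the soundness of this procedure is needed.
   Words are coded by offsets: [o] stands for the letter [o + k] when [o < N],
   and codes [>= N] denote nothing, so they are never commuted. *)
Fixpoint cancel_partner (N a : nat) (u : seq nat) : option (seq nat) :=
  if u is b :: u' then
    if b == a then Some u'
    else if [&& a < N, b < N & far a b] then omap (cons b) (cancel_partner N a u')
    else None
  else None.

Fixpoint cancel_first (N : nat) (w : seq nat) : option (seq nat) :=
  if w is a :: w' then
    if cancel_partner N a w' is Some u then Some u else omap (cons a) (cancel_first N w')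
  else None.

Fixpoint reduce_word (N fuel : nat) (w : seq nat) : seq nat :=
  if fuel is fuel'.+1 then
    if cancel_first N w is Some w' then reduce_word N fuel' w' else w
  else w.

Section WordReduction.
Variables (n k N : nat) (decode : nat -> 'I_n.-1).
Hypothesis decodeE : forall o, o < N -> decode o = o + k :> nat.

Lemma cancel_partner_eq a u u' : cancel_partner N a u = Some u' ->
  tw_eq (map decode (a :: u)) (map decode u').
Proof.
elim: u u' => [|b u IH] u' //=.
case: eqP => [-> [<-]|_]; first exact: (tw_cancel [::] _ _).
case: ifP => // /and3P[ha hb ab].
case e: cancel_partner => [u''|] //= [<-].
have far_ab : far (decode a) (decode b).
  by rewrite /far !decodeE //; move: ab; rewrite /far; lia.
exact: tw_trans (tw_swap [::] _ far_ab) (tw_eq_catr [:: decode b] (IH _ e)).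
Qed.

Lemma cancel_first_eq w w' : cancel_first N w = Some w' ->
  tw_eq (map decode w) (map decode w').
Proof.
elim: w w' => [|a w IH] w' //=.
case e: cancel_partner => [u|]; first by move=> [<-]; exact: cancel_partner_eq.
case: cancel_first IH => [w''|] //= IH [<-].
exact: (tw_eq_catr [:: decode a] (IH _ erefl)).
Qed.

Lemma reduce_word_eq fuel w : tw_eq (map decode w) (map decode (reduce_word N fuel w)).
Proof.
elim: fuel w => [|fuel IH] w /=; first exact: tw_refl.
case e: cancel_first => [w'|]; last exact: tw_refl.
exact: tw_trans (cancel_first_eq e) (IH w').
Qed.

Lemma tw_eq_reduce u v : reduce_word N (size u + size v) (u ++ rev v) = [::] ->
  tw_eq (map decode u) (map decode v).
Proof.
move=> e; apply: tw_eq_mulrV; rewrite -map_rev -map_cat.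
by have := reduce_word_eq (size u + size v) (u ++ rev v); rewrite e.
Qed.

End WordReduction.

Section Generated.
Variables (n : nat) (S : tw_word n -> Prop).
Implicit Types (u v w g : tw_word n) (x y : 'I_n.-1).
Notation G := (tw_gen S).

Lemma tw_gen_eqr u v : tw_eq u v -> G v -> G u.
Proof. by move=> e Gv; apply: tw_gen_eq Gv (tw_sym e). Qed.

Lemma tw_gen_cat u v : G u -> G v -> G (u ++ v).
Proof. exact: tw_gen_mul. Qed.

Lemma tw_gen_rev u : G u -> G (rev u).
Proof. exact: tw_gen_inv. Qed.

Lemma tw_gen_nil_eq u : tw_eq u [::] -> G u.
Proof. by move=> e; apply: tw_gen_eqr e (tw_gen_one S). Qed.

Hypothesis conj_gen : forall s x, S s -> G (tw_conj x s).

Lemma tw_gen_conj x w : G w -> G (tw_conj x w).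
Proof.
rewrite /tw_conj; elim=> {w} [s Ss||u _ IH|u v _ IHu _ IHv|u v _ IH e].
- exact: conj_gen.
- apply: tw_gen_nil_eq; exact: (tw_cancel [::] x [::]).
- by have := tw_gen_inv IH; rewrite /tw_inv rev_cons rev_cat -cats1.
- apply: tw_gen_eqr (tw_gen_mul IHu IHv).
  by rewrite /tw_mul /= -!catA; apply: tw_sym; exact: (tw_cancel (x :: u) x (v ++ [:: x])).
- exact: tw_gen_eqr (tw_ctx [:: x] [:: x] (tw_sym e)) IH.
Qed.

Lemma tw_gen_conj_word g w : G w -> G (rev g ++ w ++ g).
Proof.
elim: g w => [|x g IH] w Gw; first by rewrite cats0.
rewrite rev_cons -cats1 -catA; have := IH _ (tw_gen_conj x Gw); by rewrite /tw_conj /= -catA.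
Qed.

Hypothesis letter_comm_gen : forall x y, G [:: x; y; x; y].

Lemma tw_gen_comm_letter u y : G (rev u ++ y :: u ++ [:: y]).
Proof.
elim: u => [|x u IH] /=; first by apply: tw_gen_nil_eq; exact: (tw_cancel [::] y [::]).
apply: tw_gen_eqr (tw_gen_cat (tw_gen_conj_word u (letter_comm_gen x y)) IH).
rewrite rev_cons -cats1 -!catA; apply: tw_eq_catr => /=.
do 3 apply: (tw_eq_catr [:: _]).
apply: tw_sym; apply: tw_trans (tw_cancel [::] y _); rewrite catA.
exact: (tw_ctx [:: y] (y :: u ++ [:: y]) (tw_mulrV u)).
Qed.

Lemma tw_gen_commutator u v : G (tw_commutator u v).
Proof.
rewrite /tw_commutator /tw_mul /tw_inv -catA.
elim: v => [|y v IH]; first by rewrite cats0; apply: tw_gen_nil_eq; exact: tw_mulVr.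
have Gyu := tw_gen_conj_word v (tw_gen_comm_letter u y).
apply: tw_gen_eqr (tw_gen_cat IH Gyu).
rewrite rev_cons -cats1 -!catA; apply: tw_eq_catr; apply: tw_sym => /=.
rewrite -!catA; apply: tw_trans (tw_eq_catr _ (tw_cancel_word u v _)) _.
exact: tw_cancel_word.
Qed.

End Generated.

Lemma tw_gen_sub n (S T : tw_word n -> Prop) :
  (forall w, S w -> tw_gen T w) -> forall w, tw_gen S w -> tw_gen T w.
Proof.
move=> ST w; elim=> {w} [s /ST//||u _|u v _ Gu _ Gv|u v _ Gu e].
- exact: tw_gen_one.
- exact: tw_gen_rev.
- exact: tw_gen_cat.
- exact: tw_gen_eq e.
Qed.

(** * Weighted letter counts *)

Definition state := nat -> bool.
Definition toggle (p : state) (i : nat) : state := fun j => p j (+) (j == i).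
Definition zero_state : state := fun=> false.

Definition weight := state -> nat -> bool.

Definition admissible (F : weight) :=
  (forall p i, F (toggle p i) i = F p i) /\
  (forall p i j, far i j -> F p i (+) F (toggle p i) j = F p j (+) F (toggle p j) i).

Lemma admissible_addb F F' :
  admissible F -> admissible F' -> admissible (fun p i => F p i (+) F' p i).
Proof.
move=> [F_sq F_comm] [F'_sq F'_comm]; split=> [p i|p i j ij]; first by rewrite F_sq F'_sq.
by rewrite addbACA F_comm // F'_comm // addbACA.
Qed.

Section WeightSum.
Variable n : nat.
Implicit Types (u v w : tw_word n) (x : 'I_n.-1) (p : state) (F : weight).

Definition letter_parity w j := odd (count (fun x : 'I_n.-1 => x == j :> nat) w).
Definition parity_after p w : state := fun j => p j (+) letter_parity w j.
Definition even_word w := forall j, letter_parity w j = false.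

Fixpoint weight_sum F p w : bool :=
  if w is x :: w' then F p x (+) weight_sum F (toggle p x) w' else false.

Lemma parity_after_cons p x w : parity_after (toggle p x) w = parity_after p (x :: w).
Proof.
apply: functional_extensionality => j.
by rewrite /parity_after /toggle /letter_parity /= oddD oddb eq_sym addbA.
Qed.

Lemma weight_sum_cat F p u v :
  weight_sum F p (u ++ v) = weight_sum F p u (+) weight_sum F (parity_after p u) v.
Proof.
elim: u p => [|x u IH] p /=; last by rewrite IH parity_after_cons addbA.
congr weight_sum; apply: functional_extensionality => j.
by rewrite /parity_after /letter_parity addbF.
Qed.

Lemma weight_sum_addb F F' p w :
  weight_sum (fun p i => F p i (+) F' p i) p w = weight_sum F p w (+) weight_sum F' p w.
Proof. by elim: w p => [|x w IH] p //=; rewrite IH addbACA. Qed.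

Lemma letter_parity_eq u v : tw_eq u v -> letter_parity u =1 letter_parity v.
Proof.
rewrite /letter_parity; elim=> {u v} [x|x y _|//|u v _ e|u v w _ e1 _ e2|a b u v _ e] j /=.
- by case: (x == j :> nat).
- by rewrite addnCA.
- by rewrite e.
- by rewrite e1 e2.
- by rewrite !count_cat !oddD e.
Qed.

Lemma parity_after_eq p u v : tw_eq u v -> parity_after p u = parity_after p v.
Proof.
move=> e; apply: functional_extensionality => j.
by rewrite /parity_after (letter_parity_eq e).
Qed.

Lemma weight_sum_eq F p u v :
  admissible F -> tw_eq u v -> weight_sum F p u = weight_sum F p v.
Proof.
move=> [F_sq F_comm] e.
elim: e p => {u v} [x|x y /orP xy|//|u v _ e|u v w _ e1 _ e2|a b u v e IH] p /=.
- by rewrite F_sq addbF addbb.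
- by rewrite !addbF F_comm.
- by rewrite e.
- by rewrite e1 e2.
- by rewrite !weight_sum_cat IH (parity_after_eq _ e).
Qed.

Lemma even_word_eq u v : tw_eq u v -> even_word u -> even_word v.
Proof. by move=> e ev j; rewrite -(letter_parity_eq e). Qed.

Lemma even_word_cat u v : even_word u -> even_word v -> even_word (u ++ v).
Proof. by move=> eu ev j; rewrite /letter_parity count_cat oddD [odd _]eu [odd _]ev. Qed.

Lemma even_word_rev u : even_word u -> even_word (rev u).
Proof. by move=> eu j; rewrite /letter_parity count_rev; exact: eu. Qed.

Lemma parity_after_even p u : even_word u -> parity_after p u = p.
Proof.
by move=> eu; apply: functional_extensionality => j; rewrite /parity_after eu addbF.
Qed.

Lemma weight_sum_even_cat F u v : even_word u ->
  weight_sum F zero_state (u ++ v) = weight_sum F zero_state u (+) weight_sum F zero_state v.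
Proof. by move=> eu; rewrite weight_sum_cat parity_after_even. Qed.

Lemma weight_sum_even_rev F u : admissible F -> even_word u ->
  weight_sum F zero_state (rev u) = weight_sum F zero_state u.
Proof.
move=> F_adm eu; have := weight_sum_eq zero_state F_adm (tw_mulrV u).
by rewrite weight_sum_even_cat //=; do 2 case: weight_sum.
Qed.

Lemma derived_even w : tw_derived w -> even_word w.
Proof.
elim=> {w} [_ [u [v ->]]||u _|u v _ eu _ ev|u v _ eu e].
- move=> j; rewrite /letter_parity /tw_commutator /tw_mul /tw_inv !count_cat !count_rev.
  by rewrite !oddD addbACA !addbb.
- by [].
- exact: even_word_rev.
- exact: even_word_cat.
- exact: even_word_eq e eu.
Qed.

End WeightSum.

Section WeightVector.
Import GRing.Theory.
Local Open Scope ring_scope.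
Variables (n r : nat) (F : 'I_r -> weight).
Hypothesis F_adm : forall t, admissible (F t).
Implicit Types (u v w : tw_word n).

Definition weight_vector w : 'rV['F_2]_r := \row_t (weight_sum (F t) zero_state w)%:R.

Lemma natr_addb_F2 (b c : bool) : ((b (+) c)%:R : 'F_2) = b%:R + c%:R.
Proof. by case: b; case: c => //=; apply: val_inj. Qed.

Lemma weight_vector_eq u v : tw_eq u v -> weight_vector u = weight_vector v.
Proof. by move=> e; apply/rowP => t; rewrite !mxE (weight_sum_eq _ (F_adm t) e). Qed.

Lemma weight_vector_cat u v : even_word u ->
  weight_vector (u ++ v) = weight_vector u + weight_vector v.
Proof. by move=> eu; apply/rowP => t; rewrite !mxE weight_sum_even_cat // natr_addb_F2. Qed.

Lemma weight_vector_rev u : even_word u -> weight_vector (rev u) = weight_vector u.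
Proof. by move=> eu; apply/rowP => t; rewrite !mxE weight_sum_even_rev. Qed.

Lemma weight_vector_nil : weight_vector [::] = 0.
Proof. by apply/rowP => t; rewrite !mxE. Qed.

Lemma weight_vector_gen k (g : 'I_k -> tw_word n) w :
  (forall i, even_word (g i)) -> tw_gen (fun x => exists i, x = g i) w ->
  even_word w /\ (weight_vector w <= \matrix_i weight_vector (g i))%MS.
Proof.
move=> g_even; elim=> {w} [_ [i ->]||u _ [eu su]|u v _ [eu su] _ [ev sv]|u v _ [eu su] e].
- split=> //; rewrite (_ : weight_vector _ = row i (\matrix_i weight_vector (g i))).
    exact: row_sub.
  by apply/rowP => t; rewrite !mxE.
- by rewrite weight_vector_nil sub0mx.
- by split; [exact: even_word_rev | rewrite /tw_inv weight_vector_rev].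
- by split; [exact: even_word_cat | rewrite /tw_mul weight_vector_cat // addmx_sub].
- by split; [exact: even_word_eq e eu | rewrite -(weight_vector_eq e)].
Qed.

Lemma generating_family_size (H : tw_word n -> Prop) k (g : 'I_k -> tw_word n)
    (h : 'I_r -> tw_word n) :
  (forall w, H w -> even_word w) -> (forall t, H (h t)) ->
  (forall t, weight_vector (h t) = delta_mx ord0 t) -> tw_generates H g -> (r <= k)%N.
Proof.
move=> H_even Hh h_basis gen_g.
have g_even i : even_word (g i) by apply/H_even/gen_g/tw_gen_base; exists i.
have full : (1%:M <= \matrix_i weight_vector (g i))%MS.
  apply/row_subP => t; rewrite row1 -h_basis.
  exact: (weight_vector_gen g_even ((gen_g _).1 (Hh t))).2.
by have := mxrankS full; rewrite mxrank1 => /leq_trans; apply; exact: rank_leq_row.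
Qed.

End WeightVector.

Ltac bool_cases :=
  repeat match goal with
  | |- context [?a == ?b :> nat] =>
      first [ rewrite (_ : (a == b) = true); last (apply/eqP; lia)
            | rewrite (_ : (a == b) = false); last (apply/eqP; lia)
            | case: (a =P b) => ?; try subst ]
  end;
  repeat match goal with |- context [?p ?x] => is_var p; case: (p x) end;
  try done.

Definition adj_weight k : weight := fun p i => (i == k.+1) && p k.

Definition triple_weight k : weight := fun p i =>
  ((i == k.+2) && p k && p k.+1) (+) ((i == k) && p k.+1 && p k.+2).

Lemma adj_weight_admissible k : admissible (adj_weight k).
Proof. by split=> [p i|p i j /orP ij]; rewrite /adj_weight /toggle; bool_cases. Qed.

Lemma triple_weight_admissible k : admissible (triple_weight k).
Proof. by split=> [p i|p i j /orP ij]; rewrite /triple_weight /toggle; bool_cases. Qed.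

(** * The derived subgroup of TW_(m+2) *)

Section DerivedSubgroup.
Variable m : nat.
Notation word := (tw_word (m + 2)).
Notation letter := ('I_(m + 2).-1).

Lemma tw_letters_gt0 : 0 < (m + 2).-1. Proof. by rewrite addn2. Qed.

(* [tau j] is the letter τ_j for [j <= m]; other [j] give a junk letter. *)
Definition tau (j : nat) : letter := insubd (Ordinal tw_letters_gt0) j.

Lemma tauE j : j <= m -> tau j = j :> nat.
Proof. by move=> hj; rewrite val_insubd ifT //; lia. Qed.

Lemma tau_val (x : letter) : tau x = x.
Proof. by apply: val_inj => /=; rewrite tauE //; have := ltn_ord x; lia. Qed.

Lemma tw_eq_reduce_tau i N u v : i + N <= m.+1 ->
  reduce_word N (size u + size v) (u ++ rev v) = [::] ->
  tw_eq (map (fun o => tau (o + i)) u) (map (fun o => tau (o + i)) v).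
Proof. by move=> h; apply: tw_eq_reduce => o ho /=; rewrite tauE //; lia. Qed.

Ltac reify_letter i t :=
  lazymatch t with
  | tau i => constr:(0)
  | tau i.+1 => constr:(1)
  | tau i.+2 => constr:(2)
  | tau i.+3 => constr:(3)
  end.

Ltac reify_word i w :=
  lazymatch w with
  | [::] => constr:(@nil nat)
  | ?x :: ?w' =>
      let o := reify_letter i x in let u := reify_word i w' in constr:(o :: u)
  end.

Definition adj_comm i : word := [:: tau i; tau i.+1; tau i; tau i.+1].
Definition adj_comm_conj i : word := tw_conj (tau i.+2) (adj_comm i).

(* Proves an identity between words in τ_i, ..., τ_(i+3) by coding both sides
   as offsets from [i] and running [reduce_word]. *)
Ltac twin_identity i :=
  rewrite /adj_comm_conj /tw_conj /adj_comm /tw_commutator /tw_mul /tw_inv /rev /=;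
  lazymatch goal with |- tw_eq ?l ?r =>
    let u := reify_word i l in let v := reify_word i r in
    let N := eval compute in (foldr maxn 0 (u ++ v)).+1 in
    apply: (@tw_eq_reduce_tau i N u v); [lia | by []]
  end.

Lemma far_tau v j : v <= m -> j <= m -> far (tau v) (tau j) = far v j.
Proof. by move=> hv hj; rewrite !tauE. Qed.

Lemma conj_adj_comm_self i : i < m ->
  tw_eq (tw_conj (tau i) (adj_comm i)) (rev (adj_comm i)).
Proof. by move=> hi; twin_identity i. Qed.

Lemma conj_adj_comm_succ i : i < m ->
  tw_eq (tw_conj (tau i.+1) (adj_comm i)) (rev (adj_comm i)).
Proof. by move=> hi; twin_identity i. Qed.

Lemma conj_adj_comm_pred i : i.+1 < m ->
  tw_eq (tw_conj (tau i) (adj_comm i.+1))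
        (adj_comm i ++ adj_comm i.+1 ++ rev (adj_comm_conj i)).
Proof. by move=> hi; twin_identity i. Qed.

Lemma conj_adj_comm_conj_self i : i.+1 < m ->
  tw_eq (tw_conj (tau i) (adj_comm_conj i)) (rev (adj_comm_conj i)).
Proof. by move=> hi; twin_identity i. Qed.

Lemma conj_adj_comm_conj_succ i : i.+1 < m ->
  tw_eq (tw_conj (tau i.+1) (adj_comm_conj i))
        (adj_comm i.+1 ++ rev (adj_comm_conj i) ++ rev (adj_comm i.+1)).
Proof. by move=> hi; twin_identity i. Qed.

Lemma conj_adj_comm_conj_top i : i.+1 < m ->
  tw_eq (tw_conj (tau i.+2) (adj_comm_conj i)) (adj_comm i).
Proof. by move=> hi; twin_identity i. Qed.

Lemma conj_adj_comm_conj_up i : i.+2 < m ->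
  tw_eq (tw_conj (tau i.+3) (adj_comm_conj i))
        (rev (adj_comm i.+2) ++ adj_comm_conj i ++ adj_comm i.+2).
Proof. by move=> hi; twin_identity i. Qed.

Lemma conj_adj_comm_conj_pred i : i.+2 < m ->
  tw_eq (tw_conj (tau i) (adj_comm_conj i.+1))
        (adj_comm i ++ adj_comm_conj i.+1 ++ rev (adj_comm i.+2) ++
         rev (adj_comm_conj i) ++ adj_comm i.+2).
Proof. by move=> hi; twin_identity i. Qed.

Lemma adj_comm_conj_commutator i : i.+1 < m ->
  tw_eq (adj_comm_conj i) (tw_commutator [:: tau i] [:: tau i.+2; tau i.+1; tau i.+2]).
Proof. by move=> hi; twin_identity i. Qed.

Definition derived_gen (t : 'I_(2 * m - 1)) : word :=
  if t < m then adj_comm t else adj_comm_conj (t - m).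

Notation G := (tw_gen (fun w => exists t, w = derived_gen t)).

Lemma adj_comm_gen i : i < m -> G (adj_comm i).
Proof.
move=> hi; have ht : i < 2 * m - 1 by lia.
by apply: tw_gen_base; exists (Ordinal ht); rewrite /derived_gen /= hi.
Qed.

Lemma adj_comm_conj_gen i : i.+1 < m -> G (adj_comm_conj i).
Proof.
move=> hi; have ht : i + m < 2 * m - 1 by lia.
apply: tw_gen_base; exists (Ordinal ht); rewrite /derived_gen /= ifF ?addnK //; lia.
Qed.

Lemma conj_adj_comm_gen i v : i < m -> v <= m -> G (tw_conj (tau v) (adj_comm i)).
Proof.
have [->|[->|[->|[<-|/andP[f0 f1]]]]] :
  v = i \/ v = i.+1 \/ v = i.+2 \/ v.+1 = i \/ far v i && far v i.+1 by rewrite /far; lia.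
all: move=> hi hv.
- exact: tw_gen_eqr (conj_adj_comm_self hi) (tw_gen_rev (adj_comm_gen hi)).
- exact: tw_gen_eqr (conj_adj_comm_succ hi) (tw_gen_rev (adj_comm_gen hi)).
- by apply: adj_comm_conj_gen; lia.
- apply: (tw_gen_eqr (conj_adj_comm_pred hi)).
  apply: tw_gen_cat; first by apply: adj_comm_gen; lia.
  exact: tw_gen_cat (adj_comm_gen hi) (tw_gen_rev (adj_comm_conj_gen hi)).
- apply: tw_gen_eqr (tw_conj_far _) (adj_comm_gen hi).
  by rewrite /= !far_tau ?f0 ?f1 //; lia.
Qed.

Lemma conj_adj_comm_conj_gen i v :
  i.+1 < m -> v <= m -> G (tw_conj (tau v) (adj_comm_conj i)).
Proof.
have [->|[->|[->|[->|[<-|/and3P[f0 f1 f2]]]]]] : v = i \/ v = i.+1 \/ v = i.+2 \/ v = i.+3 \/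
  v.+1 = i \/ [&& far v i, far v i.+1 & far v i.+2] by rewrite /far; lia.
all: move=> hi hv.
- exact: tw_gen_eqr (conj_adj_comm_conj_self hi) (tw_gen_rev (adj_comm_conj_gen hi)).
- apply: (tw_gen_eqr (conj_adj_comm_conj_succ hi)).
  apply: tw_gen_cat; first exact: adj_comm_gen.
  apply: tw_gen_cat (tw_gen_rev (adj_comm_conj_gen hi)) (tw_gen_rev (adj_comm_gen hi)).
- by apply: (tw_gen_eqr (conj_adj_comm_conj_top hi)); apply: adj_comm_gen; lia.
- have hi2 : i.+2 < m by lia.
  apply: (tw_gen_eqr (conj_adj_comm_conj_up hi2)).
  apply: tw_gen_cat (tw_gen_rev (adj_comm_gen hi2)) _.
  exact: tw_gen_cat (adj_comm_conj_gen hi) (adj_comm_gen hi2).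
- have hv2 : v.+2 < m by lia.
  apply: (tw_gen_eqr (conj_adj_comm_conj_pred hv2)).
  apply: tw_gen_cat; first by apply: adj_comm_gen; lia.
  apply: tw_gen_cat (adj_comm_conj_gen hi) _.
  apply: tw_gen_cat (tw_gen_rev (adj_comm_gen hv2)) _.
  apply: tw_gen_cat (tw_gen_rev (adj_comm_conj_gen _)) (adj_comm_gen hv2); lia.
- apply: tw_gen_eqr (tw_conj_far _) (adj_comm_conj_gen hi).
  by rewrite /= !far_tau ?f0 ?f1 ?f2 //; lia.
Qed.

Lemma conj_derived_gen s x : (exists t, s = derived_gen t) -> G (tw_conj x s).
Proof.
move=> [t ->]; rewrite -(tau_val x); have hx : x <= m by have := ltn_ord x; lia.
rewrite /derived_gen; case: ifP => ht; first exact: conj_adj_comm_gen.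
by apply: conj_adj_comm_conj_gen => //; have := ltn_ord t; lia.
Qed.

Lemma tau_comm_gen u v : u <= m -> v <= m -> G [:: tau u; tau v; tau u; tau v].
Proof.
have [->|[->|[->|uv]]] : u = v \/ v = u.+1 \/ u = v.+1 \/ far u v by rewrite /far; lia.
all: move=> hu hv.
- exact/tw_gen_nil_eq/tw_comm_self.
- exact: adj_comm_gen.
- exact: (tw_gen_rev (adj_comm_gen hu)).
- by apply/tw_gen_nil_eq/tw_comm_far; rewrite far_tau.
Qed.

Lemma letter_comm_gen x y : G [:: x; y; x; y].
Proof.
rewrite -(tau_val x) -(tau_val y).
by apply: tau_comm_gen; [have := ltn_ord x | have := ltn_ord y]; lia.
Qed.

Lemma derived_gen_derived t : tw_derived (derived_gen t).
Proof.
rewrite /derived_gen; case: ifP => ht.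
  by apply: tw_gen_base; exists [:: tau t], [:: tau t.+1].
have hi : (t - m).+1 < m by have := ltn_ord t; lia.
apply: tw_gen_eq (tw_sym (adj_comm_conj_commutator hi)).
by apply: tw_gen_base; do 2 eexists.
Qed.

Lemma derived_generated : tw_generates (@tw_derived (m + 2)) derived_gen.
Proof.
move=> w; split.
  apply: tw_gen_sub => _ [u [v ->]].
  exact: tw_gen_commutator conj_derived_gen letter_comm_gen u v.
by apply: tw_gen_sub => _ [t ->]; exact: derived_gen_derived.
Qed.

(* The xor removes the contribution of [adj_weight t] on [adj_comm_conj t]. *)
Definition derived_weight (t : 'I_(2 * m - 1)) : weight :=
  if t < m then fun p i => adj_weight t p i (+) triple_weight t p i
  else triple_weight (t - m).

Lemma derived_weight_admissible t : admissible (derived_weight t).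
Proof.
rewrite /derived_weight; case: ifP => _; last exact: triple_weight_admissible.
exact: admissible_addb (adj_weight_admissible _) (triple_weight_admissible _).
Qed.

Lemma weight_sum_adj_comm k i : i < m ->
  weight_sum (adj_weight k) zero_state (adj_comm i) = (k == i).
Proof.
move=> hi; rewrite /adj_comm /= !tauE; try lia.
by rewrite /adj_weight /toggle /zero_state; bool_cases.
Qed.

Lemma weight_sum_adj_comm_conj k i : i.+1 < m ->
  weight_sum (adj_weight k) zero_state (adj_comm_conj i) = (k == i).
Proof.
move=> hi; rewrite /adj_comm_conj /tw_conj /adj_comm /= !tauE; try lia.
by rewrite /adj_weight /toggle /zero_state; bool_cases.
Qed.

Lemma weight_sum_triple_adj_comm k i : i < m ->
  weight_sum (triple_weight k) zero_state (adj_comm i) = false.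
Proof.
move=> hi; rewrite /adj_comm /= !tauE; try lia.
by rewrite /triple_weight /toggle /zero_state; bool_cases.
Qed.

Lemma weight_sum_triple_adj_comm_conj k i : i.+1 < m ->
  weight_sum (triple_weight k) zero_state (adj_comm_conj i) = (k == i).
Proof.
move=> hi; rewrite /adj_comm_conj /tw_conj /adj_comm /= !tauE; try lia.
by rewrite /triple_weight /toggle /zero_state; bool_cases.
Qed.

Lemma weight_sum_derived_gen t t' :
  weight_sum (derived_weight t') zero_state (derived_gen t) = (t' == t).
Proof.
rewrite -val_eqE /=; have ht := ltn_ord t; have ht' := ltn_ord t'.
rewrite /derived_weight /derived_gen; case: ifP => t'_lt; case: ifP => t_lt.
- by rewrite weight_sum_addb weight_sum_adj_comm // weight_sum_triple_adj_comm // addbF.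
- have hi : (t - m).+1 < m by lia.
  rewrite weight_sum_addb weight_sum_adj_comm_conj // weight_sum_triple_adj_comm_conj //.
  by rewrite addbb; apply/esym/eqP; lia.
- by rewrite weight_sum_triple_adj_comm //; apply/esym/eqP; lia.
- by rewrite weight_sum_triple_adj_comm_conj; [apply/eqP/eqP | ]; lia.
Qed.

Lemma weight_vector_derived_gen t :
  weight_vector derived_weight (derived_gen t) = delta_mx ord0 t.
Proof. by apply/rowP => t'; rewrite !mxE weight_sum_derived_gen eqxx. Qed.

End DerivedSubgroup.

Theorem theorem1p2 (m : nat) (hm : (1 <= m)%N) :
  @tw_rank_eq (m + 2) (@tw_derived (m + 2)) (2 * m - 1).
Proof.
split; first by exists (@derived_gen m); exact: derived_generated.
move=> k g gen_g.
exact: (generating_family_size (@derived_weight_admissible m) (@derived_even _)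
  (@derived_gen_derived m) (@weight_vector_derived_gen m) gen_g).
Qed.
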